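(* There is an absolute constant $C$ such that for every simple temporal clique on $n$ vertices and every bidirectional fireworks cover $S$ of it (for any outcome of the arbitrary choices in the constructions), $|S|\le \frac{1}{2}\binom{n}{2}+Cn$.
   Context: A simple temporal clique is a pair $\mathcal{G}=(G,\lambda)$ where $G=(V,E)$ is the complete graph on a finite set $V$ of $n$ vertices and $\lambda:E\to\mathbb{N}$ assigns to each edge a single integer label such that any two distinct edges sharing an endpoint have different labels; the label of an arc $(x,y)$ is $\lambda(\{x,y\})$. For a vertex $v$, $e^-(v)$ (resp. $e^+(v)$) is the edge incident to $v$ with smallest (resp. largest) label. Forward construction: let $E^-$ be the set of arcs $(u,v)$ with $\{u,v\}=e^-(v)$, except that if $e^-(u)=e^-(v)=\{u,v\}$ only one of $(u,v),(v,u)$ is included (arbitrarily). Initialize $E^-_T:=E^-$; for every vertex $v$ of out-degree at least $2$ in $(V,E^-)$, with out-arcs $(v,u_1),\dots,(v,u_\ell)$ where $(v,u_\ell)$ has the largest label, for each $i<\ell$: if $u_i$ has out-degree $0$ in $(V,E^-)$ replace $(v,u_i)$ by $(u_i,v)$ in $E^-_T$, otherwise remove $(v,u_i)$ from $E^-_T$. Emitters ($X^-$) are vertices of out-degree $0$ in $(V,E^-_T)$. Backward construction: let $E^+$ be the set of arcs $(v,u)$ with $\{u,v\}=e^+(v)$, except that if $e^+(u)=e^+(v)=\{u,v\}$ only one of $(u,v),(v,u)$ is included (arbitrarily). Initialize $E^+_T:=E^+$; for every vertex $v$ of in-degree at least $2$ in $(V,E^+)$, with in-arcs $(u_1,v),\dots,(u_\ell,v)$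 where $(u_\ell,v)$ has the smallest label, for each $i<\ell$: if $u_i$ has in-degree $0$ in $(V,E^+)$ replace $(u_i,v)$ by $(v,u_i)$ in $E^+_T$, otherwise remove $(u_i,v)$ from $E^+_T$. Collectors ($X^+$) are vertices of in-degree $0$ in $(V,E^+_T)$. The bidirectional fireworks cover is $S=\{\{u,v\}:(u,v)\in E^-_T\cup E^+_T\}\cup\{\{u,v\}\in E: u\in X^-, v\in X^+\}$. *)

From mathcomp Require Import all_boot.
Set Implicit Arguments. Unset Strict Implicit. Unset Printing Implicit Defensive.

Section Fireworks.
Variables (V : finType) (lam : V -> V -> nat).

(* lam x y is the label lambda({x,y}) of the edge {x,y} (x != y); values on
   the diagonal are irrelevant. *)
Definition simple_temporal_clique : Prop :=
  (forall x y, lam x y = lam y x) /\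
  (forall u v w, u != v -> u != w -> v != w -> lam u v != lam u w).

Definition is_emin (v u : V) : bool :=
  (u != v) && [forall w, ((w != v) && (w != u)) ==> (lam v u < lam v w)].
Definition is_emax (v u : V) : bool :=
  (u != v) && [forall w, ((w != v) && (w != u)) ==> (lam v w < lam v u)].

(* Em is a valid outcome of the arbitrary choices defining E^- :
   arcs (u,v) with {u,v} = e^-(v); if e^-(u) = e^-(v) = {u,v}, exactly one of
   (u,v),(v,u) is included. *)
Definition is_Eminus (Em : rel V) : Prop :=
  (forall u v, Em u v -> is_emin v u) /\
  (forall u v, is_emin v u -> ~~ is_emin u v -> Em u v) /\
  (forall u v, is_emin v u -> is_emin u v -> Em u v (+) Em v u).

Definition is_Eplus (Ep : rel V) : Prop :=
  (forall v u, Ep v u -> is_emax v u) /\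
  (forall v u, is_emax v u -> ~~ is_emax u v -> Ep v u) /\
  (forall v u, is_emax v u -> is_emax u v -> Ep v u (+) Ep u v).

Definition outdeg (R : rel V) (v : V) : nat := #|[set w | R v w]|.
Definition indeg (R : rel V) (v : V) : nat := #|[set w | R w v]|.

Definition keep_minus (Em : rel V) (v u : V) : bool :=
  (outdeg Em v < 2) || [forall w, Em v w ==> (lam v w <= lam v u)].

Definition EminusT (Em : rel V) : rel V := fun x y =>
  (Em x y && keep_minus Em x y) ||
  [&& Em y x, ~~ keep_minus Em y x & outdeg Em x == 0].

Definition keep_plus (Ep : rel V) (v u : V) : bool :=
  (indeg Ep v < 2) || [forall w, Ep w v ==> (lam u v <= lam w v)].

Definition EplusT (Ep : rel V) : rel V := fun x y =>
  (Ep x y && keep_plus Ep y x) ||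
  [&& Ep y x, ~~ keep_plus Ep x y & indeg Ep y == 0].

Definition emitters (Em : rel V) : {set V} :=
  [set x | outdeg (EminusT Em) x == 0].
Definition collectors (Ep : rel V) : {set V} :=
  [set x | indeg (EplusT Ep) x == 0].

Definition fireworks_cover (Em Ep : rel V) : {set {set V}} :=
  [set e : {set V} |
     [exists x, exists y, (EminusT Em x y || EplusT Ep x y) && (e == [set x; y])]
  || [exists x, exists y, [&& x \in emitters Em, y \in collectors Ep,
                              x != y & e == [set x; y]]]].

End Fireworks.

From mathcomp Require Import all_boot zify.
Set Implicit Arguments. Unset Strict Implicit. Unset Printing Implicit Defensive.

(** Every edge of the cover is an arc of E^-, an arc of E^+, or joins an
    emitter to a collector.  Each vertex is the head of at most one arc of
    E^- (its tail spans e^-(v)), so E^- has at most n edges, and likewise for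
    E^+.  The content of the theorem is that there are at most n/2 emitters
    (and dually at most n/2 collectors): an emitter u has no arc of E^- out of
    it, so the arc p -> u of E^- spanning e^-(u) must have survived the
    trimming (otherwise it would have been reversed into u), hence it is the
    unique surviving out-arc of p; thus u |-> p injects the emitters into the
    non-emitters.  The cover then has at most 2n + n^2/4 edges. *)

Section Trim.
Variables (V : finType) (R K : rel V).

(* Both constructions are instances: [EminusT Em] is
   [trim Em (keep_minus lam Em)] and [EplusT Ep] is the converse of
   [trim (fun x y => Ep y x) (keep_plus lam Ep)]. *)
Definition trim : rel V := fun x y =>
  (R x y && K x y) || [&& R y x, ~~ K y x & outdeg R x == 0].

Definition trim_sinks : {set V} := [set x | outdeg trim x == 0].

Lemma trim_sub_sym x y : trim x y -> R x y || R y x.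
Proof. by case/orP => [/andP[-> _] | /and3P[-> _ _]]; rewrite ?orbT. Qed.

Lemma trim_sinkP u w : u \in trim_sinks -> trim u w = false.
Proof. by rewrite inE cards_eq0 => /eqP/setP/(_ w); rewrite !inE. Qed.

Hypothesis sink_has_pred : forall u, (forall w, ~~ R u w) -> exists p, R p u.
Hypothesis kept_exists : forall x u, R x u -> exists v, R x v && K x v.
Hypothesis kept_uniq : forall x u v, R x u -> R x v -> K x u -> K x v -> u = v.

Lemma trim_sink_no_arc u w : u \in trim_sinks -> ~~ R u w.
Proof.
move=> uS; apply/negP => /kept_exists[v /andP[Ruv Kuv]].
by have := trim_sinkP v uS; rewrite /trim Ruv Kuv.
Qed.

Lemma trim_sink_kept_pred u : u \in trim_sinks -> exists p, R p u && K p u.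
Proof.
move=> uS; have [p Rpu] := sink_has_pred (fun w => trim_sink_no_arc w uS).
exists p; rewrite Rpu; apply/negPn/negP => nKpu.
have Ru0 : outdeg R u == 0.
  by rewrite cards_eq0; apply/eqP/setP => w; rewrite !inE (negbTE (trim_sink_no_arc w uS)).
by have := trim_sinkP p uS; rewrite /trim Rpu nKpu Ru0 orbT.
Qed.

Lemma card_trim_sinks : 2 * #|trim_sinks| <= #|V|.
Proof.
pose f u := odflt u [pick p | R p u && K p u].
have fP u : u \in trim_sinks -> R (f u) u && K (f u) u.
  move=> uS; rewrite /f; case: pickP => [//|none].
  by have [p] := trim_sink_kept_pred uS; rewrite none.
have f_inj : {in trim_sinks &, injective f}.
  move=> u v uS vS fuv; have /andP[Ru Ku] := fP u uS.
  have /andP[Rv Kv] := fP v vS; rewrite -fuv in Rv Kv.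
  exact: kept_uniq Ru Rv Ku Kv.
have disj : [disjoint trim_sinks & f @: trim_sinks].
  apply/pred0P => x /=; apply/negbTE/andP => -[xS /imsetP[u uS x_def]].
  rewrite x_def in xS; have /andP[Rfu _] := fP u uS.
  by have := trim_sink_no_arc u xS; rewrite Rfu.
have [_] := leq_card_setU trim_sinks (f @: trim_sinks); rewrite disj => /eqP card_U.
by rewrite mul2n -addnn -{2}(card_in_imset f_inj) -card_U max_card.
Qed.

End Trim.

Section Edges.
Variable V : finType.

Definition arc_edges (R : rel V) : {set {set V}} :=
  [set [set x; y] | x in V, y in R x].

Definition cross_edges (A B : {set V}) : {set {set V}} :=
  [set [set x; y] | x in A, y in B].

Lemma card_arc_edges (R : rel V) :
  (forall x x' y, R x y -> R x' y -> x = x') -> #|arc_edges R| <= #|V|.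
Proof.
move=> tail_uniq; pose tail y := odflt y [pick x | R x y].
apply: (@leq_trans #|[set [set tail y; y] | y : V]|); last exact: leq_imset_card.
apply: subset_leq_card; apply/subsetP => e /imset2P[x y _ Rxy ->]; rewrite -topredE /= in Rxy.
apply/imsetP; exists y => //; rewrite /tail; case: pickP => [x' Rx'y | none].
  by rewrite (tail_uniq _ _ _ Rx'y Rxy).
by rewrite none in Rxy.
Qed.

Lemma mem_arc_edges (R : rel V) x y : R x y || R y x -> [set x; y] \in arc_edges R.
Proof.
by case/orP => Rxy; [|rewrite setUC]; apply/imset2P; [exists x y | exists y x].
Qed.

Lemma card_cross_edges (A B : {set V}) : #|cross_edges A B| <= #|A| * #|B|.
Proof. by rewrite /cross_edges curry_imset2X -cardsX leq_imset_card. Qed.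

End Edges.

Section Clique.
Variables (V : finType) (lam : V -> V -> nat).

Lemma strict_extremum_uniq (ord : rel nat) (f : V -> nat) v u u' :
  (forall a b, ord a b -> ~~ ord b a) ->
  (u != v) && [forall w, (w != v) && (w != u) ==> ord (f u) (f w)] ->
  (u' != v) && [forall w, (w != v) && (w != u') ==> ord (f u') (f w)] ->
  u = u'.
Proof.
move=> ord_asym /andP[uv /forallP ext] /andP[u'v /forallP ext'].
apply/eqP/negP => /negP uu'.
have u'_other : (u' != v) && (u' != u) by rewrite u'v eq_sym.
have u_other : (u != v) && (u != u') by rewrite uv.
by have := ord_asym _ _ (implyP (ext u') u'_other); rewrite (implyP (ext' u) u_other).
Qed.

Lemma emin_uniq v u u' : is_emin lam v u -> is_emin lam v u' -> u = u'.
Proof. by apply: (strict_extremum_uniq (ord := ltn)) => a b /ltnW; rewrite leqNgt. Qed.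

Lemma emax_uniq v u u' : is_emax lam v u -> is_emax lam v u' -> u = u'.
Proof.
by apply: (strict_extremum_uniq (ord := fun a b => b < a)) => a b /ltnW; rewrite leqNgt.
Qed.

Lemma exists_neq (v : V) : 1 < #|V| -> exists w, w != v.
Proof.
move=> V_gt1; have /card_gt0P[w] : 0 < #|[set~ v]| by rewrite cardsC1; lia.
by rewrite in_setC1; exists w.
Qed.

Hypothesis clique : simple_temporal_clique lam.

Lemma clique_label_inj x u v : x != u -> x != v -> lam x u = lam x v -> u = v.
Proof. by case: clique => _ lam_inj xu xv; apply: contra_eq; apply: lam_inj. Qed.

Lemma emin_exists v : 1 < #|V| -> exists u, is_emin lam v u.
Proof.
case: clique => _ lam_inj /(exists_neq v)[w wv].
case: (@arg_minnP _ w (fun x => x != v) (lam v)) => // u uv u_min.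
exists u; rewrite /is_emin uv; apply/forallP => x; apply/implyP => /andP[xv xu].
by rewrite ltn_neqAle u_min // andbT lam_inj // eq_sym.
Qed.

Lemma emax_exists v : 1 < #|V| -> exists u, is_emax lam v u.
Proof.
case: clique => _ lam_inj /(exists_neq v)[w wv].
case: (@arg_maxnP _ w (fun x => x != v) (lam v)) => // u uv u_max.
exists u; rewrite /is_emax uv; apply/forallP => x; apply/implyP => /andP[xv xu].
have lam_xu : lam v x <= lam v u := u_max x xv.
by rewrite ltn_neqAle lam_xu andbT eq_sym lam_inj // eq_sym.
Qed.

End Clique.

Section Fireworks.
Variables (V : finType) (lam : V -> V -> nat) (Em Ep : rel V).
Hypotheses (clique : simple_temporal_clique lam)
  (hEm : is_Eminus lam Em) (hEp : is_Eplus lam Ep).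

Lemma Eminus_spans_emin v u : is_emin lam v u -> Em u v || Em v u.
Proof.
case: hEm => _ [Em_uniq Em_both] vu; case uv: (is_emin lam u v).
  by have := Em_both _ _ vu uv; case: (Em u v).
by rewrite Em_uniq // uv.
Qed.

Lemma Eplus_spans_emax v u : is_emax lam v u -> Ep v u || Ep u v.
Proof.
case: hEp => _ [Ep_uniq Ep_both] vu; case uv: (is_emax lam u v).
  by have := Ep_both _ _ vu uv; case: (Ep v u).
by rewrite Ep_uniq // uv.
Qed.

Lemma card_emitters : 1 < #|V| -> 2 * #|emitters lam Em| <= #|V|.
Proof.
move=> V_gt1; have [Em_emin _] := hEm.
apply: (card_trim_sinks (K := keep_minus lam Em)).
- move=> u no_out; have [x ux] := emin_exists clique u V_gt1; exists x.
  by have := Eminus_spans_emin ux; rewrite (negbTE (no_out x)) orbF.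
- move=> x u Rxu; case: (leqP 2 (outdeg Em x)) => deg_x.
    case: (arg_maxnP (lam x) Rxu) => v Rxv v_max.
    exists v; rewrite Rxv /keep_minus; apply/orP; right.
    by apply/forallP => w; apply/implyP; apply: v_max.
  by exists u; rewrite Rxu /keep_minus deg_x.
- move=> x u v Rxu Rxv; rewrite /keep_minus; case: ltnP => [deg_x _ _ | _ /= Ku Kv].
    by apply: (card_le1_eqP deg_x); rewrite inE.
  have [/andP[xu _] /andP[xv _]] := (Em_emin _ _ Rxu, Em_emin _ _ Rxv).
  apply: (clique_label_inj clique xu xv).
  by apply/eqP; rewrite eqn_leq (implyP (forallP Ku v)) ?(implyP (forallP Kv u)).
Qed.

Lemma card_collectors : 1 < #|V| -> 2 * #|collectors lam Ep| <= #|V|.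
Proof.
move=> V_gt1; have [Ep_emax _] := hEp; have [lam_sym _] := clique.
apply: (card_trim_sinks (R := fun x y => Ep y x) (K := keep_plus lam Ep)).
- move=> u no_in; have [x ux] := emax_exists clique u V_gt1; exists x.
  by have := Eplus_spans_emax ux; rewrite (negbTE (no_in x)) orbF.
- move=> x u Rux; case: (leqP 2 (indeg Ep x)) => deg_x.
    case: (@arg_minnP _ u (Ep^~ x) (lam^~ x) Rux) => v Rvx v_min.
    exists v; rewrite Rvx /keep_plus; apply/orP; right.
    by apply/forallP => w; apply/implyP; apply: v_min.
  by exists u; rewrite Rux /keep_plus deg_x.
- move=> x u v Rux Rvx; rewrite /keep_plus; case: ltnP => [deg_x _ _ | _ /= Ku Kv].
    by apply: (card_le1_eqP deg_x); rewrite inE.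
  have [/andP[xu _] /andP[xv _]] := (Ep_emax _ _ Rux, Ep_emax _ _ Rvx).
  apply: (clique_label_inj clique xu xv); rewrite lam_sym [lam x v]lam_sym.
  by apply/eqP; rewrite eqn_leq (implyP (forallP Ku v)) ?(implyP (forallP Kv u)).
Qed.

Lemma fireworks_cover_sub :
  fireworks_cover lam Em Ep \subset
    arc_edges Em :|: arc_edges (fun x y => Ep y x)
    :|: cross_edges (emitters lam Em) (collectors lam Ep).
Proof.
apply/subsetP => e; rewrite inE => /orP[].
  case/existsP => x /existsP[y /andP[/orP[arc | arc] /eqP->]]; rewrite !in_setU.
    by rewrite mem_arc_edges // (trim_sub_sym arc).
  have := @trim_sub_sym _ (fun a b => Ep b a) (keep_plus lam Ep) y x arc.
  by rewrite orbC => /(@mem_arc_edges _ (fun a b => Ep b a)) ->; rewrite orbT.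
case/existsP => x /existsP[y /and4P[xX yX _ /eqP->]].
by rewrite in_setU; apply/orP; right; apply/imset2P; exists x y.
Qed.

Lemma card_fireworks_cover :
  #|fireworks_cover lam Em Ep| <= #|V| + #|V| + #|emitters lam Em| * #|collectors lam Ep|.
Proof.
have [[Em_emin _] [Ep_emax _]] := (hEm, hEp).
have card_Em : #|arc_edges Em| <= #|V|.
  apply: card_arc_edges => x x' y /Em_emin + /Em_emin; exact: emin_uniq.
have card_Ep : #|arc_edges (fun x y => Ep y x)| <= #|V|.
  apply: card_arc_edges => x x' y /Ep_emax + /Ep_emax; exact: emax_uniq.
apply: leq_trans (subset_leq_card fireworks_cover_sub) _.
apply: leq_trans (leq_of_leqif (leq_card_setU _ _)) _.
rewrite leq_add ?card_cross_edges //.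
by apply: leq_trans (leq_of_leqif (leq_card_setU _ _)) _; rewrite leq_add.
Qed.

End Fireworks.

Theorem theorem7 :
  exists C : nat,
    forall (V : finType) (lam : V -> V -> nat) (Em Ep : rel V),
      simple_temporal_clique lam ->
      is_Eminus lam Em -> is_Eplus lam Ep ->
      2 * #|fireworks_cover lam Em Ep| <= 'C(#|V|, 2) + 2 * C * #|V|.
Proof.
exists 3 => V lam Em Ep clique hEm hEp.
have := card_fireworks_cover hEm hEp.
have two_bin : 2 * 'C(#|V|, 2) = #|V| * #|V|.-1 by rewrite -mul_bin_diag bin1.
have [le_a le_b] := (max_card (emitters lam Em), max_card (collectors lam Ep)).
case: (leqP #|V| 1) => [V_le1 | V_gt1].
  have : #|emitters lam Em| * #|collectors lam Ep| <= 1 * #|V|.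
    exact: leq_mul (leq_trans le_a V_le1) le_b.
  lia.
have half_a := card_emitters clique hEm V_gt1.
have half_b := card_collectors clique hEp V_gt1.
have := leq_mul half_a half_b; nia.
Qed.
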